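(* Let $\gamma>0$, $b>0$, $u_{max}>0$, $i_0\in[0,1]$, and let $\beta$ be a bounded nonnegative (measurable) function of time. For a deadline $T>0$, consider the problem of minimizing $J(u)=-i(T)+\int_0^T b\,u^2(t)\,dt$ over Lebesgue integrable $u$ with $0\le u(t)\le u_{max}$, subject to $\dot i(t) = -\beta(t) i^2(t) + (\beta(t)-\gamma-u(t)) i(t) + u(t)$, $i(0)=i_0$, $0\le i(t)\le 1$. The optimality system (from Pontryagin's Maximum Principle) for this problem consists of the state equation above together with the adjoint equation $$\dot\lambda(t) = 2\beta(t)\, i(t)\,\lambda(t) - \big(\beta(t)-\gamma-u(t)\big)\lambda(t),\qquad \lambda(T)=1,$$ and the control characterization $$u(t)=\min\Big\{\max\Big\{\tfrac{\lambda(t)(1-i(t))}{2b},\,0\Big\},\,u_{max}\Big\}.$$ Then for a sufficiently small campaign deadline $T$, the state and adjoint trajectories $(i,\lambda)$ at the optimum (i.e. the solution of this optimality system) and the optimal control $u$ are unique.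
   Context: Controlled SIS information epidemic: $i(t)$ is the fraction of informed individuals, $\beta(t)$ the effective spreading rate, $\gamma$ the recovery rate, $u(t)$ the direct recruitment control, $\lambda(t)$ the adjoint variable. *)

From HB Require Import structures.
From mathcomp Require Import all_boot all_order all_algebra.
From mathcomp Require Import all_classical all_reals all_analysis.
Set Implicit Arguments. Unset Strict Implicit. Unset Printing Implicit Defensive.
Import Order.TTheory GRing.Theory Num.Theory.
Local Open Scope classical_set_scope.
Local Open Scope ring_scope.

Section SIS.
Variable R : realType.

Notation mu := (@lebesgue_measure R).

Definition state_rhs (beta : R -> R) (gamma : R) (i u : R -> R) (t : R) : R :=
  - beta t * i t ^+ 2 + (beta t - gamma - u t) * i t + u t.

Definition adjoint_rhs (beta : R -> R) (gamma : R) (i lam u : R -> R) (t : R) : R :=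
  2 * beta t * i t * lam t - (beta t - gamma - u t) * lam t.

Definition control_char (b umax : R) (i lam : R -> R) (t : R) : R :=
  Num.min (Num.max (lam t * (1 - i t) / (2 * b)) 0) umax.

(* Solutions of the ODEs
   are understood in the Caratheodory (absolutely continuous / integral) sense:
   the right-hand sides are Lebesgue integrable on [0,T] and the trajectories
   are given by their integrals. *)
Definition optimality_system (beta : R -> R) (gamma b umax i0 T : R)
    (i lam u : R -> R) : Prop :=
  mu.-integrable `[0, T] (EFin \o u) /\
      (forall t, 0 <= t <= T -> 0 <= u t <= umax) /\
      (forall t, 0 <= t <= T -> 0 <= i t <= 1) /\
      mu.-integrable `[0, T] (EFin \o state_rhs beta gamma i u) /\
      (forall t, 0 <= t <= T ->
         i t = i0 + Rintegral mu `[0, t] (state_rhs beta gamma i u)) /\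
      mu.-integrable `[0, T] (EFin \o adjoint_rhs beta gamma i lam u) /\
      (forall t, 0 <= t <= T ->
         lam t = lam 0 + Rintegral mu `[0, t] (adjoint_rhs beta gamma i lam u)) /\
      lam T = 1 /\
      (forall t, 0 <= t <= T -> u t = control_char b umax i lam t).

End SIS.

From HB Require Import structures.
From mathcomp Require Import all_boot all_order all_algebra.
From mathcomp Require Import all_classical all_reals all_analysis.
From mathcomp Require Import ring lra.
Import Order.TTheory GRing.Theory Num.Theory.
Local Open Scope classical_set_scope.
Local Open Scope ring_scope.

(* Both solutions of the optimality system stay in a bounded region: i in
   [0, 1] by assumption, and |lam| <= 2 on a short horizon, because lam is the
   terminal value 1 minus an integral whose integrand grows at most linearly in
   lam.  On that region the state and adjoint right-hand sides and the clamped
   control are Lipschitz with a constant L depending only on the data, so the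
   supremum S of |i1 - i2| + |lam1 - lam2| over [0, T] satisfies
   S <= 3 L T S: once for the forward integral of the state and twice for the
   adjoint, which is anchored at T.  For 3 L T < 1 this forces S = 0. *)

Section Rintegral_itv_bounds.
Context {R : realType}.
Notation mu := (@lebesgue_measure R).
Implicit Types (a b c t : R) (f g : R -> R).

Lemma integrable_itv_le a b c f : b <= c ->
  mu.-integrable `[a, c] (EFin \o f) -> mu.-integrable `[a, b] (EFin \o f).
Proof.
by move=> bc; apply: integrableS => //; apply: subset_itvl; rewrite bnd_simp.
Qed.

Lemma normr_Rintegral_itv_le {a t b c f} : a <= t <= b ->
  mu.-integrable `[a, b] (EFin \o f) ->
  (forall x, a <= x <= b -> `|f x| <= c) ->
  `|\int[mu]_(x in `[a, t]) f x| <= c * (t - a).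
Proof.
move=> /andP[ta tb] intf fc.
have {}intf : mu.-integrable `[a, t] (EFin \o f) by exact: integrable_itv_le intf.
have mat : measurable (`[a, t] : set R) by exact: measurable_itv.
have c0 : 0 <= c by apply: le_trans (normr_ge0 (f a)) (fc a _); rewrite lexx (le_trans ta tb).
rewrite -lee_fin EFin_normr_Rintegral //.
apply: le_trans (le_abse_integral mu mat _) _; first by case/integrableP: intf.
have mu_at : mu (`[a, t] : set R) = (t - a)%:E.
  rewrite lebesgue_measure_itv /= lte_fin; case: ifPn => [_|]; first by rewrite EFinB.
  by rewrite -leNgt => ta'; rewrite (@le_anti _ _ a t) ?ta ?ta' // subrr.
have : (\int[mu]_(x in `[a, t]) `|(EFin \o f) x| <= c%:E * mu (`[a, t] : set R))%E.
  apply: integral_le_bound => //; first by case/integrableP: intf.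
  apply: aeW => x; rewrite /= in_itv /= lee_fin => /andP[ax xt].
  by apply: fc; rewrite ax (le_trans xt tb).
by rewrite mu_at -EFinM.
Qed.

Lemma normr_Rintegral_subitv_le {a t b f} : a <= t <= b ->
  mu.-integrable `[a, b] (EFin \o f) ->
  `|\int[mu]_(x in `[a, t]) f x| <= \int[mu]_(x in `[a, b]) `|f x|.
Proof.
move=> /andP[ta tb] intf.
apply: le_trans (le_normr_Rintegral _ _) _ => //.
  exact: integrable_itv_le intf.
rewrite -subr_ge0 (@Rintegral_itvB _ (Num.norm \o f)) ?bnd_simp //.
  by apply: Rintegral_ge0 => x _ /=.
exact: integrable_norm.
Qed.

Lemma normr_RintegralB_itv_le {a t b c f g} : a <= t <= b ->
  mu.-integrable `[a, b] (EFin \o f) -> mu.-integrable `[a, b] (EFin \o g) ->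
  (forall x, a <= x <= b -> `|f x - g x| <= c) ->
  `|\int[mu]_(x in `[a, t]) f x - \int[mu]_(x in `[a, t]) g x| <= c * (t - a).
Proof.
move=> tab intf intg fgc; have /andP[_ tb] := tab.
rewrite -RintegralB //; try exact: integrable_itv_le tb _.
apply: normr_Rintegral_itv_le fgc => //.
exact: (integrableB _ intf intg).
Qed.

End Rintegral_itv_bounds.

Section self_improving_bound.
Context {R : realType} {T : Type}.
Variables (D : set T) (h : T -> R) (a q : R).
Hypotheses (D_neq0 : D !=set0) (q_lt1 : q < 1).
Hypothesis h_bounded : exists B, forall x, D x -> h x <= B.
Hypothesis h_improve : forall S, (forall x, D x -> h x <= S) ->
  forall x, D x -> h x <= a + q * S.

Lemma self_improving_bound x : D x -> h x <= a / (1 - q).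
Proof.
have hD_sup : has_sup (h @` D).
  split; first by case: D_neq0 => y Dy; exists (h y), y.
  by case: h_bounded => B hB; exists B => _ [y Dy <-]; exact: hB.
have h_le_sup y : D y -> h y <= sup (h @` D).
  by move=> Dy; apply: sup_upper_bound => //; exists y.
have sup_le : sup (h @` D) <= a + q * sup (h @` D).
  by apply: ge_sup; [case: hD_sup | move=> _ [y Dy <-]; exact: h_improve].
move=> Dx; apply: le_trans (h_le_sup x Dx) _.
by rewrite ler_pdivlMr ?subr_gt0 //; lra.
Qed.

End self_improving_bound.

Section sis_pointwise_estimates.
Context {R : realFieldType}.

Lemma normr_lincomb2_le (a x b y A B : R) : `|a| <= A -> `|b| <= B ->
  `|a * x + b * y| <= A * `|x| + B * `|y|.
Proof.
move=> aA bB; apply: le_trans (ler_normD _ _) _; rewrite !normrM.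
by apply: lerD; apply: ler_wpM2r.
Qed.

Context {M gamma umax : R}.

Lemma sis_state_lipschitz (beta i1 i2 u1 u2 : R) :
  0 <= gamma -> 0 <= beta <= M -> 0 <= i1 <= 1 -> 0 <= i2 <= 1 ->
  0 <= u1 <= umax -> 0 <= u2 <= umax ->
  `|(- beta * i1 ^+ 2 + (beta - gamma - u1) * i1 + u1) -
    (- beta * i2 ^+ 2 + (beta - gamma - u2) * i2 + u2)|
  <= (3 * M + gamma + umax) * `|i1 - i2| + `|u1 - u2|.
Proof.
move=> g0 /andP[b0 bM] /andP[i1_ge0 i1_le1] /andP[i2_ge0 i2_le1].
move=> /andP[u1_ge0 u1_le] /andP[u2_ge0 u2_le].
have -> : (- beta * i1 ^+ 2 + (beta - gamma - u1) * i1 + u1) -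
    (- beta * i2 ^+ 2 + (beta - gamma - u2) * i2 + u2) =
  (- beta * (i1 + i2) + beta - gamma - u1) * (i1 - i2) + (1 - i2) * (u1 - u2)
  by ring.
rewrite -[X in _ <= _ + X]mul1r.
have bi1 : 0 <= beta * i1 <= beta by rewrite mulr_ge0 ?ler_piMr.
have bi2 : 0 <= beta * i2 <= beta by rewrite mulr_ge0 ?ler_piMr.
by apply: normr_lincomb2_le; rewrite ler_norml; apply/andP; split; lra.
Qed.

Lemma sis_adjoint_linear_bound (beta i l u : R) :
  0 <= gamma -> 0 <= beta <= M -> 0 <= i <= 1 -> 0 <= u <= umax ->
  `|2 * beta * i * l - (beta - gamma - u) * l| <= (3 * M + gamma + umax) * `|l|.
Proof.
move=> g0 /andP[b0 bM] /andP[i_ge0 i_le1] /andP[u_ge0 u_le].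
have -> : 2 * beta * i * l - (beta - gamma - u) * l =
  (2 * beta * i - beta + gamma + u) * l by ring.
by rewrite normrM ler_wpM2r // ler_norml; apply/andP; split; nra.
Qed.

Lemma sis_adjoint_lipschitz (beta i1 i2 l1 l2 u1 u2 : R) :
  0 <= gamma -> 0 <= beta <= M -> 0 <= i1 <= 1 -> 0 <= u1 <= umax ->
  `|l2| <= 2 ->
  `|(2 * beta * i1 * l1 - (beta - gamma - u1) * l1) -
    (2 * beta * i2 * l2 - (beta - gamma - u2) * l2)|
  <= (3 * M + gamma + umax) * `|l1 - l2| + 4 * M * `|i1 - i2|
     + 2 * `|u1 - u2|.
Proof.
move=> g0 beta_bnd i1_bnd u1_bnd l2_le2; have /andP[b0 bM] := beta_bnd.
have -> : (2 * beta * i1 * l1 - (beta - gamma - u1) * l1) -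
    (2 * beta * i2 * l2 - (beta - gamma - u2) * l2) =
  (2 * beta * i1 * l1 - (beta - gamma - u1) * l1)
  - (2 * beta * i1 * l2 - (beta - gamma - u1) * l2)
  + ((2 * beta * l2) * (i1 - i2) + l2 * (u1 - u2)) by ring.
apply: le_trans (ler_normD _ _) _; rewrite -[leRHS]addrA; apply: lerD.
  have -> : (2 * beta * i1 * l1 - (beta - gamma - u1) * l1)
    - (2 * beta * i1 * l2 - (beta - gamma - u1) * l2) =
    2 * beta * i1 * (l1 - l2) - (beta - gamma - u1) * (l1 - l2) by ring.
  exact: sis_adjoint_linear_bound.
apply: normr_lincomb2_le => //.
rewrite normrM (ger0_norm (_ : 0 <= 2 * beta)); last nra.
have := normr_ge0 l2; nra.
Qed.

Lemma clamp_lipschitz (x y m : R) : 0 <= m ->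
  `|Num.min (Num.max x 0) m - Num.min (Num.max y 0) m| <= `|x - y|.
Proof.
move=> m0; rewrite ler_norml; have [xy|xy] := lerP 0 (x - y);
  rewrite ?(ger0_norm xy) ?(ltr0_norm xy) /Num.max /Num.min;
  case: (ltrP x 0) => ?; case: (ltrP y 0) => ? /=;
  repeat (case: ifPn => [?|]; last rewrite -leNgt => ?); lra.
Qed.

Lemma sis_control_lipschitz (b i1 i2 l1 l2 : R) : 0 < b -> 0 <= umax ->
  0 <= i1 <= 1 -> `|l2| <= 2 ->
  `|Num.min (Num.max (l1 * (1 - i1) / (2 * b)) 0) umax -
    Num.min (Num.max (l2 * (1 - i2) / (2 * b)) 0) umax|
  <= (`|l1 - l2| + 2 * `|i1 - i2|) / (2 * b).
Proof.
move=> b0 umax0 /andP[i1_ge0 i1_le1] l2_le2.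
apply: le_trans (clamp_lipschitz _ _ _ umax0) _.
have -> : l1 * (1 - i1) / (2 * b) - l2 * (1 - i2) / (2 * b) =
  ((1 - i1) * (l1 - l2) + (- l2) * (i1 - i2)) / (2 * b) by field; lra.
have b2_ge0 : 0 <= (2 * b)^-1 by rewrite invr_ge0; lra.
rewrite normrM (ger0_norm b2_ge0) ler_wpM2r // -(mul1r `|l1 - l2|).
by apply: normr_lincomb2_le; rewrite ?normrN // ler_norml; lra.
Qed.

End sis_pointwise_estimates.

Section optimality_system_estimates.
Context {R : realType}.
Notation mu := (@lebesgue_measure R).
Context {beta : R -> R} {gamma b umax i0 T M : R}.
Hypotheses (gamma_ge0 : 0 <= gamma) (umax_ge0 : 0 <= umax) (T_ge0 : 0 <= T).
Hypothesis beta_bnd : forall t, 0 <= beta t <= M.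

Let D := [set t : R | 0 <= t <= T].
(* K bounds the coefficient of lam in the adjoint equation; L below is the
   Lipschitz constant of the coupled state/adjoint/control system. *)
Let K := 3 * M + gamma + umax.

Let M_ge0 : 0 <= M.
Proof. by have /andP[b0 bM] := beta_bnd 0; exact: le_trans b0 bM. Qed.

Let K_ge0 : 0 <= K.
Proof. by rewrite /K !addr_ge0 // mulr_ge0. Qed.

Let D0 : D 0. Proof. by rewrite /D /= lexx T_ge0. Qed.
Let DT : D T. Proof. by rewrite /D /= lexx T_ge0. Qed.

Lemma adjoint_value {i lam u : R -> R} :
  optimality_system beta gamma b umax i0 T i lam u -> forall t, 0 <= t <= T ->
  lam t = 1 - \int[mu]_(x in `[0, T]) adjoint_rhs beta gamma i lam u x
            + \int[mu]_(x in `[0, t]) adjoint_rhs beta gamma i lam u x.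
Proof.
move=> [_ [_ [_ [_ [_ [_ [lam_eq [lamT _]]]]]]]] t tT.
by rewrite (lam_eq t tT) -lamT (lam_eq T DT); ring.
Qed.

Lemma adjoint_rhs_norm_le {i lam u : R -> R} {S : R} :
  optimality_system beta gamma b umax i0 T i lam u ->
  (forall t, 0 <= t <= T -> `|lam t| <= S) ->
  forall t, 0 <= t <= T -> `|adjoint_rhs beta gamma i lam u t| <= K * S.
Proof.
move=> [_ [u_bnd [i_bnd _]]] lam_le t tT.
apply: le_trans (sis_adjoint_linear_bound _ _ _ _ gamma_ge0 (beta_bnd t)
  (i_bnd t tT) (u_bnd t tT)) _.
by rewrite ler_wpM2l // lam_le.
Qed.

Lemma adjoint_norm_le2 {i lam u : R -> R} : 4 * K * T <= 1 ->
  optimality_system beta gamma b umax i0 T i lam u ->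
  forall t, 0 <= t <= T -> `|lam t| <= 2.
Proof.
move=> K_small sys; have [_ [_ [_ [_ [_ [int_g [lam_eq _]]]]]]] := sys.
suff lam_le t : D t -> `|lam t| <= 1 / (1 - 2 * K * T).
  move=> t /lam_le /le_trans; apply.
  have := K_ge0; have := T_ge0; rewrite ler_pdivrMr; nra.
apply: (@self_improving_bound _ _ D (fun t => `|lam t|) 1 (2 * K * T))
  => [|||S lam_le {}t Dt].
- by exists 0.
- lra.
- exists (`|lam 0| + \int[mu]_(x in `[0, T]) `|adjoint_rhs beta gamma i lam u x|).
  move=> x Dx; rewrite (lam_eq x Dx); apply: le_trans (ler_normD _ _) _.
  by rewrite lerD2l normr_Rintegral_subitv_le.
have g_le := adjoint_rhs_norm_le sys lam_le.
have int_T := normr_Rintegral_itv_le DT int_g g_le.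
have int_t := normr_Rintegral_itv_le Dt int_g g_le.
have S_ge0 : 0 <= S := le_trans (normr_ge0 (lam 0)) (lam_le 0 D0).
have /andP[t_ge0 t_leT] := Dt.
have KSt : K * S * t <= K * S * T by rewrite ler_wpM2l ?mulr_ge0.
rewrite (adjoint_value sys t Dt) !subr0 in int_T int_t *.
set A := \int[mu]_(x in `[0, T]) _ in int_T *.
set B := \int[mu]_(x in `[0, t]) _ in int_t *.
have := ler_normD (1 - A) B; have := ler_normB 1 A; rewrite normr1.
lra.
Qed.

Context {i1 lam1 u1 i2 lam2 u2 : R -> R}.
Hypotheses (sys1 : optimality_system beta gamma b umax i0 T i1 lam1 u1)
           (sys2 : optimality_system beta gamma b umax i0 T i2 lam2 u2).
Hypotheses (b_gt0 : 0 < b) (K_small : 4 * K * T <= 1).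

Let L := K + 4 * M + 2 / b.
Let L_ge0 : 0 <= L.
Proof. by rewrite /L /K !addr_ge0 ?mulr_ge0 // invr_ge0 ltW. Qed.

Let dist t := `|i1 t - i2 t| + `|lam1 t - lam2 t|.

Section dist_bound.
Variable S : R.
Hypothesis dist_le : forall t, 0 <= t <= T -> dist t <= S.

Lemma control_dist_le t : 0 <= t <= T -> `|u1 t - u2 t| <= S / b.
Proof.
move=> tT.
have [_ [_ [i1_bnd [_ [_ [_ [_ [_ u1_eq]]]]]]]] := sys1.
have [_ [_ [_ [_ [_ [_ [_ [_ u2_eq]]]]]]]] := sys2.
rewrite (u1_eq t tT) (u2_eq t tT) /control_char.
apply: le_trans (sis_control_lipschitz _ _ _ _ _ b_gt0 umax_ge0 (i1_bnd t tT)
  (adjoint_norm_le2 K_small sys2 t tT)) _.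
have := dist_le t tT; rewrite /dist ler_pdivrMr ?mulr_gt0 // => d_le.
have -> : S / b * (2 * b) = 2 * S by field; rewrite gt_eqF.
have := normr_ge0 (lam1 t - lam2 t); lra.
Qed.

Let S_ge0 : 0 <= S.
Proof. exact: le_trans (addr_ge0 (normr_ge0 _) (normr_ge0 _)) (dist_le 0 D0). Qed.

Let Sb_ge0 : 0 <= S / b.
Proof. by rewrite divr_ge0 // ltW. Qed.

Let state_dist_le t : 0 <= t <= T -> `|i1 t - i2 t| <= S.
Proof. by move/dist_le; apply: le_trans; rewrite lerDl. Qed.

Let adjoint_dist_le t : 0 <= t <= T -> `|lam1 t - lam2 t| <= S.
Proof. by move/dist_le; apply: le_trans; rewrite lerDr. Qed.

Lemma state_rhs_dist_le t : 0 <= t <= T ->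
  `|state_rhs beta gamma i1 u1 t - state_rhs beta gamma i2 u2 t| <= L * S.
Proof.
move=> tT.
have [_ [u1_bnd [i1_bnd _]]] := sys1; have [_ [u2_bnd [i2_bnd _]]] := sys2.
apply: le_trans (sis_state_lipschitz _ _ _ _ _ gamma_ge0 (beta_bnd t)
  (i1_bnd t tT) (i2_bnd t tT) (u1_bnd t tT) (u2_bnd t tT)) _.
rewrite -/K (_ : L * S = K * S + 4 * (M * S) + 2 * (S / b)); last by rewrite /L; ring.
have := ler_wpM2l K_ge0 (state_dist_le t tT); have := control_dist_le t tT.
have := mulr_ge0 M_ge0 S_ge0; have := Sb_ge0; lra.
Qed.

Lemma adjoint_rhs_dist_le t : 0 <= t <= T ->
  `|adjoint_rhs beta gamma i1 lam1 u1 t - adjoint_rhs beta gamma i2 lam2 u2 t|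
  <= L * S.
Proof.
move=> tT.
have [_ [u1_bnd [i1_bnd _]]] := sys1.
apply: le_trans (sis_adjoint_lipschitz _ _ _ _ _ _ _ gamma_ge0 (beta_bnd t)
  (i1_bnd t tT) (u1_bnd t tT) (adjoint_norm_le2 K_small sys2 t tT)) _.
rewrite -/K (_ : L * S = K * S + 4 * M * S + 2 * (S / b)); last by rewrite /L; ring.
have := ler_wpM2l K_ge0 (adjoint_dist_le t tT); have := control_dist_le t tT.
have := ler_wpM2l (mulr_ge0 (ler0n _ 4) M_ge0) (state_dist_le t tT).
have := Sb_ge0; lra.
Qed.

Lemma dist_le_contraction t : 0 <= t <= T -> dist t <= 3 * L * T * S.
Proof.
move=> tT; have /andP[t_ge0 t_leT] := tT.
have [_ [_ [_ [int_f1 [i1_eq [int_g1 _]]]]]] := sys1.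
have [_ [_ [_ [int_f2 [i2_eq [int_g2 _]]]]]] := sys2.
have dI := normr_RintegralB_itv_le tT int_f1 int_f2 state_rhs_dist_le.
have dLT := normr_RintegralB_itv_le DT int_g1 int_g2 adjoint_rhs_dist_le.
have dLt := normr_RintegralB_itv_le tT int_g1 int_g2 adjoint_rhs_dist_le.
rewrite !subr0 in dI dLT dLt.
rewrite /dist (i1_eq t tT) (i2_eq t tT).
rewrite (adjoint_value sys1 t tT) (adjoint_value sys2 t tT).
move: dI dLT dLt; set F1 := \int[mu]_(x in _) _; set F2 := \int[mu]_(x in _) _.
set G1 := \int[mu]_(x in `[0, T]) _; set G2 := \int[mu]_(x in `[0, T]) _.
set H1 := \int[mu]_(x in _) _; set H2 := \int[mu]_(x in _) _.
have -> : i0 + F1 - (i0 + F2) = F1 - F2 by ring.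
have -> : 1 - G1 + H1 - (1 - G2 + H2) = (H1 - H2) - (G1 - G2) by ring.
have := ler_normB (H1 - H2) (G1 - G2).
have : L * S * t <= L * S * T by rewrite ler_wpM2l ?mulr_ge0.
lra.
Qed.

End dist_bound.

Lemma optimality_system_unique : 3 * L * T < 1 -> forall t, 0 <= t <= T ->
  [/\ i1 t = i2 t, lam1 t = lam2 t & u1 t = u2 t].
Proof.
move=> L_small.
have dist_le0 t : 0 <= t <= T -> dist t <= 0.
  move=> tT; rewrite -[leRHS](mul0r (1 - 3 * L * T)^-1).
  apply: (@self_improving_bound _ _ D dist 0 (3 * L * T) _ _ _ _ t tT)
    => [|||S dist_le {}t {}tT].
  - by exists 0.
  - exact: L_small.
  - exists 6 => x xT; have [_ [_ [i1_bnd _]]] := sys1; have [_ [_ [i2_bnd _]]] := sys2.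
    have := adjoint_norm_le2 K_small sys1 x xT.
    have := adjoint_norm_le2 K_small sys2 x xT.
    have := ler_normB (i1 x) (i2 x); have := ler_normB (lam1 x) (lam2 x).
    move: (i1_bnd x xT) (i2_bnd x xT); rewrite /dist.
    by do 2 case/andP=> /ger0_norm-> ?; lra.
  - by rewrite add0r; exact: dist_le_contraction.
have [_ [_ [_ [_ [_ [_ [_ [_ u1_eq]]]]]]]] := sys1.
have [_ [_ [_ [_ [_ [_ [_ [_ u2_eq]]]]]]]] := sys2.
move=> t tT; have := dist_le0 t tT; rewrite /dist.
have := normr_ge0 (i1 t - i2 t); have := normr_ge0 (lam1 t - lam2 t).
move=> lam_ge0 i_ge0 dist_t.
have /eqP : `|i1 t - i2 t| = 0 by lra.
have /eqP : `|lam1 t - lam2 t| = 0 by lra.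
rewrite !normr_eq0 !subr_eq0 => /eqP lam_eq /eqP i_eq.
by split; rewrite // (u1_eq t tT) (u2_eq t tT) /control_char i_eq lam_eq.
Qed.

End optimality_system_estimates.

Theorem theorem2 (R : realType) (gamma b umax i0 : R) (beta : R -> R) :
  0 < gamma -> 0 < b -> 0 < umax -> 0 <= i0 <= 1 ->
  measurable_fun setT beta ->
  (forall t, 0 <= beta t) ->
  (exists M : R, forall t, beta t <= M) ->
  exists T0 : R, 0 < T0 /\
    forall T : R, 0 < T -> T < T0 ->
    forall i1 lam1 u1 i2 lam2 u2 : R -> R,
      optimality_system beta gamma b umax i0 T i1 lam1 u1 ->
      optimality_system beta gamma b umax i0 T i2 lam2 u2 ->
      forall t, 0 <= t <= T ->
        [/\ i1 t = i2 t, lam1 t = lam2 t & u1 t = u2 t].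
Proof.
move=> gamma_gt0 b_gt0 umax_gt0 _ _ beta_ge0 [M beta_le].
have beta_bnd t : 0 <= beta t <= M by rewrite beta_ge0 beta_le.
have M_ge0 : 0 <= M := le_trans (beta_ge0 0) (beta_le 0).
set K := 3 * M + gamma + umax; set L := K + 4 * M + 2 / b.
have K_ge0 : 0 <= K by rewrite /K; lra.
have L_ge0 : 0 <= L by rewrite /L addr_ge0 ?divr_ge0 //; lra.
exists (4 * K + 3 * L + 1)^-1; split; first by rewrite invr_gt0; lra.
move=> T T_gt0 T_lt i1 lam1 u1 i2 lam2 u2 sys1 sys2.
have T_small : (4 * K + 3 * L + 1) * T < 1 by rewrite -ltr_pdivlMl ?div1r //; lra.
have := mulr_ge0 K_ge0 (ltW T_gt0); have := mulr_ge0 L_ge0 (ltW T_gt0) => LT KT.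
apply: (optimality_system_unique (ltW gamma_gt0) (ltW umax_gt0) (ltW T_gt0)
  beta_bnd sys1 sys2 b_gt0); rewrite -/K -/L; lra.
Qed.
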